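(* Let $\epsilon>0$ and let $u,\hat u:\mathbf{S}\to\mathbb{R}^{|P|}$ be two utility functions on the same finite game structure. Suppose that for all $(p,s)\in\mathcal{I}$, $|u_p(s)-\hat u_p(s)|\le\max\{\epsilon,\ \mathrm{Reg}_p(s;\hat u)/2\}$. Then for all $(p,s)\in\mathcal{I}$ with $\mathrm{Reg}_p(s;u)=0$, it holds that $|u_p(s)-\hat u_p(s)|\le\epsilon$.
   Context: A finite normal-form game structure: finite player set $P$, finite pure strategy sets $S_p$, $\mathbf{S}=\prod_pS_p$, index set $\mathcal{I}=P\times\mathbf{S}$. For a utility function $u$, pure profile $s$ and player $p$, $A_{p,s}$ is the set of pure profiles obtained from $s$ by replacing $p$'s strategy by any $t\in S_p$, and $\mathrm{Reg}_p(s;u)=\sup_{s'\in A_{p,s}}u_p(s')-u_p(s)$. *)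

From HB Require Import structures.
From mathcomp Require Import all_boot all_order all_algebra.
Set Implicit Arguments. Unset Strict Implicit. Unset Printing Implicit Defensive.
Import Order.TTheory GRing.Theory Num.Theory.
Local Open Scope ring_scope.

Definition profile (P : finType) (S : P -> finType) := {dffun forall p : P, S p}.

Definition deviate (P : finType) (S : P -> finType) (s : profile S) (p : P)
  (t : S p) : profile S :=
  [ffun q => match p =P q with
             | ReflectT e => eq_rect p (fun q => S q) t q e
             | ReflectF _ => s q end].

(* Reg_p(s;u) = sup_{s' in A_{p,s}} u_p(s') - u_p(s). A_{p,s} is finite and
   nonempty (it contains s), so the sup is a finite max; we seed the max with
   u_p(s), which is itself an element of the set (t = s p). *)
Definition Reg (R : realDomainType) (P : finType) (S : P -> finType)
  (u : profile S -> P -> R) (p : P) (s : profile S) : R :=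
  \big[Num.max/u s p]_(t : S p) u (deviate s t) p - u s p.

(** Let t be a best response of p for uh against s and s' the profile where p
   plays t.  Then s' has zero regret under uh, so u and uh differ by at most
   eps at s'.  If the tolerance at s were Reg_p(s; uh)/2 > eps, then, since s
   has zero regret under u,
     u_p(s) >= u_p(s') >= uh_p(s') - eps = uh_p(s) + Reg_p(s; uh) - eps,
   and Reg_p(s; uh) - eps > Reg_p(s; uh)/2 would exceed the tolerance. *)
From HB Require Import structures.
From mathcomp Require Import all_boot all_order all_algebra.
From mathcomp Require Import lra.
Import Order.TTheory GRing.Theory Num.Theory.
Local Open Scope ring_scope.

Section Deviations.
Context {P : finType} {S : P -> finType} (s : profile S) {p : P}.

Lemma deviate_id : deviate s (s p) = s.
Proof.
apply/ffunP => q; rewrite /deviate ffunE.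
by case: (p =P q) => [e|//]; subst.
Qed.

Lemma deviate_deviate (t t' : S p) : deviate (deviate s t) t' = deviate s t'.
Proof.
apply/ffunP => q; rewrite /deviate !ffunE.
by case: (p =P q).
Qed.

End Deviations.

Section Regret.
Context {R : realDomainType} {P : finType} {S : P -> finType}.
Variables (u : profile S -> P -> R) (p : P).

Definition best_payoff (s : profile S) : R :=
  \big[Num.max/u s p]_(t : S p) u (deviate s t) p.

Lemma RegE (s : profile S) : Reg u p s = best_payoff s - u s p.
Proof. by []. Qed.

Lemma le_best_payoff (s : profile S) (t : S p) :
  u (deviate s t) p <= best_payoff s.
Proof. by rewrite /best_payoff (bigD1 t) //= le_max lexx. Qed.

Lemma best_payoff_attained (s : profile S) :
  exists t : S p, best_payoff s = u (deviate s t) p.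
Proof.
rewrite /best_payoff; elim/big_ind: _.
- by exists (s p); rewrite deviate_id.
- by move=> a b [ta ->] [tb ->]; case: leP => _; [exists tb | exists ta].
- by move=> t _; exists t.
Qed.

Lemma best_payoff_deviate (s : profile S) (t : S p) :
  best_payoff (deviate s t) = best_payoff s.
Proof.
apply/le_anti/andP; split.
- have [t' ->] := best_payoff_attained (deviate s t).
  by rewrite deviate_deviate le_best_payoff.
- have [t' ->] := best_payoff_attained s.
  by rewrite -(deviate_deviate s t) le_best_payoff.
Qed.

Lemma Reg_eq0_le (s : profile S) (t : S p) :
  Reg u p s = 0 -> u (deviate s t) p <= u s p.
Proof.
by rewrite RegE => /eqP; rewrite subr_eq0 => /eqP <-; exact: le_best_payoff.
Qed.

Lemma best_response_Reg (s : profile S) :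
  exists t : S p, Reg u p (deviate s t) = 0 /\
                  Reg u p s = u (deviate s t) p - u s p.
Proof.
have [t Et] := best_payoff_attained s.
by exists t; rewrite !RegE best_payoff_deviate Et subrr.
Qed.

End Regret.

Lemma tolerance_collapse {R : realFieldType} {eps a b a' b' : R} :
  a' <= a -> `|a' - b'| <= eps ->
  `|a - b| <= Num.max eps ((b' - b) / 2) -> `|a - b| <= eps.
Proof.
move=> le_a'a close'.
case: (real_leP (num_real eps) (num_real ((b' - b) / 2))) => [tol_ge|_ //].
move: close' tol_ge; rewrite !ler_norml.
by move=> /andP[? ?] ? /andP[? ?]; apply/andP; split; lra.
Qed.

Theorem lemma4 (R : realFieldType) (P : finType) (S : P -> finType)
  (eps : R) (heps : 0 < eps) (u uh : profile S -> P -> R) :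
  (forall (p : P) (s : profile S),
      `|u s p - uh s p| <= Num.max eps (Reg uh p s / 2)) ->
  forall (p : P) (s : profile S), Reg u p s = 0 -> `|u s p - uh s p| <= eps.
Proof.
move=> close p s Reg_u0.
have [t [Reg_uh0 RegE_uh]] := best_response_Reg uh p s.
have close_dev : `|u (deviate s t) p - uh (deviate s t) p| <= eps.
  by have := close p (deviate s t); rewrite Reg_uh0 mul0r max_l // ltW.
apply: (tolerance_collapse (Reg_eq0_le u p s t Reg_u0) close_dev).
by rewrite -RegE_uh close.
Qed.
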